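(* Let $E\subset\mathbb{R}^2$, $E_o:=\{(x,y)\in E:x\neq y\}$, and let $C$ be a connected component of $E_o$ containing no identifying cycles. Let $C^{\mathsf{x}}$ and $C^{\mathsf{y}}$ denote the projections of $C$ onto the first and second coordinate. (a) For any $v:C\to\mathbb{R}$ of the form $v(x,y)=h(x)(y-x)+g(y)$ on $C$, the portfolio positions of $v$ on $C$ are not unique at any point of $C$: for every $(x,y)\in C$ there exist two portfolio positions $(h,g),(\tilde h,\tilde g)$ of $v$ on $C$ with $h(x)\neq\tilde h(x)$ and $g(y)\neq\tilde g(y)$; and the set of portfolio positions of $v$ on $C$ (restricted to $C^{\mathsf{x}}\times C^{\mathsf{y}}$) is a one-parameter family. (b) Fix $(x_0,y_0)\in C$. There exist functions $a,b:\mathbb{R}\to\mathbb{R}\setminus\{0\}$ such that $a(x)b(y)=y-x$ for all $(x,y)\in C$ and $a(x_0)=1$, and these are unique on $C^{\mathsf{x}}$ and $C^{\mathsf{y}}$, respectively. Let $v_n(x,y)=h_n(x)(y-x)+g_n(y)$, with $h_n,g_n:\mathbb{R}\to\mathbb{R}$, converge pointwise on $C$ to $v:C\to\mathbb{R}$. Define $h'_n(x):=h_n(x)-h_n(x_0)/a(x)$ and $g'_n(y):=g_n(y)+h_n(x_0)b(y)$. Then $v_n(x,y)=h'_n(x)(y-x)+g'_n(y)$ on $C$, the pointwise limits $h':=\lim_n h'_n$ on $C^{\mathsf{x}}$ and $g':=\lim_n g'_n$ on $C^{\mathsf{y}}$ exist, and $v(x,y)=h'(x)(y-x)+g'(y)$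 for all $(x,y)\in C$. In particular, semistatic strategies on $C$ are closed under pointwise convergence.
   Context: A portfolio position of $v$ on $C$ is a pair $h,g:\mathbb{R}\to\mathbb{R}$ with $v(x,y)=h(x)(y-x)+g(y)$ for all $(x,y)\in C$. A path in $E_o$ from $(x,y)\in E_o$ to $(x',y')\in E_o$ is a tuple $(x_i,y_i)_{i=1}^k\in E_o^k$, $k\in\mathbb{N}_0$, such that all points $(x,y),(x_1,y),(x_1,y_1),(x_2,y_1),\dots,(x_k,y_k),(x',y_k),(x',y')$ belong to $E_o$. Points are connected if there is a path between them; this is an equivalence relation on $E_o$ whose equivalence classes are the connected components. A cycle is a path from a point to itself; a cycle $(x_i,y_i)_{i=1}^k$ is identifying if $\prod_{i=1}^k(y_i-x_i)-\prod_{i=1}^k(y_i-x_{i+1})\neq0$ with $x_{k+1}:=x_1$. *)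

From Stdlib Require Import Reals List.
Import ListNotations.
Open Scope R_scope.

(* A set E ⊆ R^2 is a predicate E : R -> R -> Prop ("E x y" means (x,y) ∈ E). *)

Definition Eo (E : R -> R -> Prop) (x y : R) : Prop := E x y /\ x <> y.

(* is_path E x y l x' y' : the tuple l = (x_i,y_i)_{i=1..k} is a path in E_o
   from (x,y) to (x',y'), i.e. all of
   (x,y),(x_1,y),(x_1,y_1),(x_2,y_1),...,(x_k,y_k),(x',y_k),(x',y') lie in E_o. *)
Fixpoint is_path (E : R -> R -> Prop) (x y : R) (l : list (R * R)) (x' y' : R)
  : Prop :=
  match l with
  | [] => Eo E x y /\ Eo E x' y /\ Eo E x' y'
  | (x1, y1) :: l' => Eo E x y /\ Eo E x1 y /\ is_path E x1 y1 l' x' y'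
  end.

Definition connected (E : R -> R -> Prop) (x y x' y' : R) : Prop :=
  exists l, is_path E x y l x' y'.

Definition is_component (E C : R -> R -> Prop) : Prop :=
  exists x y, Eo E x y /\ forall x' y', C x' y' <-> connected E x y x' y'.

Definition prodR (l : list R) : R := fold_right Rmult 1 l.

Definition cyc_prod1 (l : list (R * R)) : R :=
  prodR (map (fun p => snd p - fst p) l).

(* prod_{i=1}^k (y_i - x_{i+1}) with x_{k+1} := x_1 *)
Definition cyc_prod2 (l : list (R * R)) : R :=
  let xs := map fst l in
  let xs_shift := match xs with [] => [] | x1 :: t => t ++ [x1] end in
  prodR (map (fun p => snd (fst p) - snd p) (combine l xs_shift)).

Definition identifying (l : list (R * R)) : Prop :=
  cyc_prod1 l - cyc_prod2 l <> 0.

Definition no_identifying_cycles (E C : R -> R -> Prop) : Prop :=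
  forall x y l, C x y -> is_path E x y l x y -> ~ identifying l.

Definition projx (C : R -> R -> Prop) (x : R) : Prop := exists y, C x y.
Definition projy (C : R -> R -> Prop) (y : R) : Prop := exists x, C x y.

Definition portfolio_position (C : R -> R -> Prop) (v : R -> R -> R)
  (h g : R -> R) : Prop :=
  forall x y, C x y -> v x y = h x * (y - x) + g y.

From Stdlib Require Import Reals List Lra ClassicalEpsilon.
Import ListNotations.
Open Scope R_scope.

(* If [a x * b y = y - x] on [C], a horizontal move [(x, y) -> (x', y)] inside [C] forces
   [a x' = a x * (y - x') / (y - x)]; so [a] is obtained by transporting the value [1] at
   [x0] along paths, and the absence of identifying cycles says precisely that this
   transport is [1] around every cycle, so [a] (and then [b]) is well defined.  Given such a
   factorisation, the difference of two portfolio positions of [v] satisfies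
   [(h - h~)(x) * a(x) = (g~ - g)(y) / b(y)] on [C]; a relation between a function of [x] and
   a function of [y] propagates along paths, so this quantity is a constant [c] and the
   positions form the family [(h + c / a, g - c * b)].  Normalising [h'_n(x0) = 0] removes the
   free parameter, after which convergence of [h'_n(x)] and of [g'_n(y)] are equivalent at
   every point of [C] and so propagate from [x0] to all of [C]. *)

Lemma choice_default (A B : Type) (P : A -> Prop) (Q : A -> B -> Prop) (d : B) :
  (forall x, P x -> exists y, Q x y) ->
  exists f : A -> B, forall x, (P x -> Q x (f x)) /\ (~ P x -> f x = d).
Proof.
  intros HPQ. apply (choice (fun x y => (P x -> Q x y) /\ (~ P x -> y = d))). intros x.
  destruct (classic (P x)) as [Hx | Hx].
  - destruct (HPQ x Hx) as [y Hy]. exists y. tauto.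
  - exists d. tauto.
Qed.

Lemma Rdiv_neq0 (r1 r2 : R) : r1 <> 0 -> r2 <> 0 -> r1 / r2 <> 0.
Proof.
  intros H1 H2. apply Rmult_integral_contrapositive_currified; [exact H1 |].
  exact (Rinv_neq_0_compat _ H2).
Qed.

Lemma Un_cv_const (c : R) : Un_cv (fun _ => c) c.
Proof.
  intros eps Heps. exists 0%nat. intros n _.
  unfold R_dist. rewrite Rminus_diag, Rabs_R0. exact Heps.
Qed.

Lemma ex_Un_cv_affine_iff (u w : nat -> R) (d L : R) :
  d <> 0 -> Un_cv (fun n => u n * d + w n) L ->
  (exists l, Un_cv u l) <-> (exists l, Un_cv w l).
Proof.
  intros Hd HL. split; intros [l Hl].
  - exists (L - l * d).
    apply Un_cv_ext with (fun n => (u n * d + w n) - u n * d); [intros n; ring |].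
    apply CV_minus; [exact HL |]. apply CV_mult; [exact Hl | apply Un_cv_const].
  - exists ((L - l) * / d).
    apply Un_cv_ext with (fun n => ((u n * d + w n) - w n) * / d); [intros n; field; exact Hd |].
    apply CV_mult; [apply CV_minus; assumption | apply Un_cv_const].
Qed.

(* For any factorisation [a x * b y = y - x] along the path, this is [a x' / a x]. *)
Fixpoint path_ratio (x y : R) (l : list (R * R)) (x' : R) : R :=
  match l with
  | [] => (y - x') / (y - x)
  | (x1, y1) :: l' => (y - x1) / (y - x) * path_ratio x1 y1 l' x'
  end.

Fixpoint diag_prod (x y : R) (l : list (R * R)) (x' : R) : R :=
  match l with
  | [] => y - x'
  | (x1, y1) :: l' => (y - x1) * diag_prod x1 y1 l' x'
  end.

Lemma cyc_prod1_cons x y l : cyc_prod1 ((x, y) :: l) = (y - x) * cyc_prod1 l.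
Proof. reflexivity. Qed.

Lemma cyc_prod2_cons x y l : cyc_prod2 ((x, y) :: l) = diag_prod x y l x.
Proof.
  enough (H : forall x y x',
    prodR (map (fun p : R * R * R => snd (fst p) - snd p)
                 (combine ((x, y) :: l) (map fst l ++ [x']))) = diag_prod x y l x')
    by exact (H x y x).
  induction l as [| [x1 y1] l IH]; intros x0 y0 x'; simpl; [ring |].
  simpl in IH. rewrite IH. reflexivity.
Qed.

Section Paths.
Variable E : R -> R -> Prop.

Lemma Eo_sub_neq0 x y : Eo E x y -> y - x <> 0.
Proof. intros [_ Hxy]. lra. Qed.

Lemma is_path_start x y l x' y' : is_path E x y l x' y' -> Eo E x y.
Proof. destruct l as [| [x1 y1] l]; simpl; tauto. Qed.

Lemma is_path_end x y l x' y' : is_path E x y l x' y' -> Eo E x' y'.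
Proof.
  revert x y. induction l as [| [x1 y1] l IH]; simpl; intros x y Hl; [tauto |].
  apply (IH x1 y1). tauto.
Qed.

Lemma is_path_cat x y l1 u w l2 x' y' :
  is_path E x y l1 u w -> is_path E u w l2 x' y' ->
  is_path E x y (l1 ++ (u, w) :: l2) x' y'.
Proof.
  revert x y. induction l1 as [| [x1 y1] l1 IH]; simpl; intros x y H1 H2; [tauto |].
  split; [tauto |]. split; [tauto |]. apply IH; tauto.
Qed.

Lemma path_ratio_cat x y l1 u w l2 x' :
  path_ratio x y (l1 ++ (u, w) :: l2) x' = path_ratio x y l1 u * path_ratio u w l2 x'.
Proof.
  revert x y. induction l1 as [| [x1 y1] l1 IH]; simpl; intros x y; [reflexivity |].
  rewrite IH. ring.
Qed.

Lemma path_ratio_neq0 x y l x' y' : is_path E x y l x' y' -> path_ratio x y l x' <> 0.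
Proof.
  revert x y. induction l as [| [x1 y1] l IH]; simpl; intros x y [Hxy [Hx1y Hl]].
  - apply Eo_sub_neq0 in Hxy, Hx1y. exact (Rdiv_neq0 _ _ Hx1y Hxy).
  - apply Eo_sub_neq0 in Hxy, Hx1y.
    exact (Rmult_integral_contrapositive_currified _ _ (Rdiv_neq0 _ _ Hx1y Hxy) (IH _ _ Hl)).
Qed.

Lemma cyc_prod1_path_neq0 x y l x' y' :
  is_path E x y l x' y' -> cyc_prod1 ((x, y) :: l) <> 0.
Proof.
  revert x y. induction l as [| [x1 y1] l IH]; intros x y Hl; rewrite cyc_prod1_cons.
  - unfold cyc_prod1. simpl.
    assert (Hxy := Eo_sub_neq0 _ _ (is_path_start _ _ _ _ _ Hl)). lra.
  - apply Rmult_integral_contrapositive_currified;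
      [exact (Eo_sub_neq0 _ _ (is_path_start _ _ _ _ _ Hl)) |].
    apply (IH x1 y1). simpl in Hl. tauto.
Qed.

Lemma path_ratio_mul_cyc_prod1 x y l x' y' :
  is_path E x y l x' y' ->
  path_ratio x y l x' * cyc_prod1 ((x, y) :: l) = diag_prod x y l x'.
Proof.
  revert x y. induction l as [| [x1 y1] l IH]; intros x y Hl; rewrite cyc_prod1_cons.
  - destruct Hl as [Hxy _]. apply Eo_sub_neq0 in Hxy.
    unfold cyc_prod1. simpl. field. exact Hxy.
  - destruct Hl as [Hxy [_ Hl]]. apply Eo_sub_neq0 in Hxy.
    simpl. rewrite <- (IH x1 y1 Hl), cyc_prod1_cons. field. exact Hxy.
Qed.

Lemma is_path_rev x y l x' y' :
  is_path E x y l x' y' ->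
  exists l', is_path E x' y' l' x y /\ path_ratio x' y' l' x * path_ratio x y l x' = 1.
Proof.
  revert x y. induction l as [| [x1 y1] l IH]; simpl; intros x y Hl.
  - exists [(x', y)]. simpl. destruct Hl as [Hxy [Hx'y Hx'y']].
    split; [tauto |].
    apply Eo_sub_neq0 in Hxy, Hx'y, Hx'y'. field. tauto.
  - destruct Hl as [Hxy [Hx1y Hl]].
    destruct (IH x1 y1 Hl) as [l' [Hl' Hratio]].
    exists (l' ++ (x1, y1) :: [(x1, y)]). split.
    + apply is_path_cat; [exact Hl' |]. simpl.
      pose proof (is_path_start _ _ _ _ _ Hl). tauto.
    + assert (Hx1y1 := Eo_sub_neq0 _ _ (is_path_start _ _ _ _ _ Hl)).
      apply Eo_sub_neq0 in Hxy, Hx1y.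
      rewrite path_ratio_cat. simpl.
      transitivity (path_ratio x' y' l' x1 * path_ratio x1 y1 l x'); [| exact Hratio].
      field. tauto.
Qed.

End Paths.

Section Component.
Variables E C : R -> R -> Prop.
Hypothesis HC : is_component E C.

Lemma component_Eo x y : C x y -> Eo E x y.
Proof.
  destruct HC as [xb [yb [_ HCb]]]. intros Hxy.
  apply HCb in Hxy as [l Hl]. exact (is_path_end _ _ _ _ _ _ Hl).
Qed.

Lemma component_path_closed x y l x' y' : C x y -> is_path E x y l x' y' -> C x' y'.
Proof.
  destruct HC as [xb [yb [_ HCb]]]. intros Hxy Hl.
  apply HCb in Hxy as [lb Hlb]. apply HCb. exists (lb ++ (x, y) :: l).
  exact (is_path_cat _ _ _ _ _ _ _ _ _ Hlb Hl).
Qed.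

Lemma component_move_x x y x' : C x y -> Eo E x' y -> C x' y.
Proof.
  intros Hxy Hx'y. apply (component_path_closed x y []); [exact Hxy |].
  simpl. pose proof (component_Eo _ _ Hxy). tauto.
Qed.

Lemma component_move_y x y y' : C x y -> Eo E x y' -> C x y'.
Proof.
  intros Hxy Hxy'. apply (component_path_closed x y []); [exact Hxy |].
  simpl. pose proof (component_Eo _ _ Hxy). tauto.
Qed.

Lemma component_connected x y x' y' : C x y -> C x' y' -> exists l, is_path E x y l x' y'.
Proof.
  destruct HC as [xb [yb [_ HCb]]]. intros Hxy Hx'y'.
  apply HCb in Hxy as [l1 Hl1]. apply HCb in Hx'y' as [l2 Hl2].
  destruct (is_path_rev _ _ _ _ _ _ Hl1) as [l1' [Hl1' _]].
  exists (l1' ++ (xb, yb) :: l2). exact (is_path_cat _ _ _ _ _ _ _ _ _ Hl1' Hl2).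
Qed.

Lemma component_inhabited : exists x y, C x y.
Proof.
  destruct HC as [xb [yb [Hb HCb]]]. exists xb, yb. apply HCb. exists []. simpl. tauto.
Qed.

(* A horizontal move keeps the ordinate and a vertical move keeps the abscissa, so [P] and
   [Q] pass to each other alternately along a path from [(x0, y0)]. *)
Lemma component_propagate (P Q : R -> Prop) x0 y0 :
  (forall x y, C x y -> (P x <-> Q y)) -> C x0 y0 -> P x0 ->
  (forall x, projx C x -> P x) /\ (forall y, projy C y -> Q y).
Proof.
  intros HPQ H0 HP0.
  enough (Hall : forall x y, C x y -> P x /\ Q y).
  { split; [intros x [y Hxy] | intros y [x Hxy]]; apply (Hall x y Hxy). }
  intros x y Hxy. destruct (component_connected _ _ _ _ H0 Hxy) as [l Hl].
  clear Hxy. revert x0 y0 H0 HP0 Hl.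
  induction l as [| [x1 y1] l IH]; simpl; intros x0 y0 H0 HP0 Hl.
  - destruct Hl as [_ [Hxy0 Hxy]].
    assert (Hxy0' := component_move_x _ _ _ H0 Hxy0).
    assert (Hxy' := component_move_y _ _ _ Hxy0' Hxy).
    assert (HP : P x) by (apply (HPQ x y0 Hxy0'), (HPQ x0 y0 H0), HP0).
    split; [exact HP | apply (HPQ x y Hxy'), HP].
  - destruct Hl as [_ [Hx1y0 Hl]].
    assert (Hx1y0' := component_move_x _ _ _ H0 Hx1y0).
    assert (Hx1y1 := component_move_y _ _ _ Hx1y0' (is_path_start _ _ _ _ _ _ Hl)).
    apply (IH x1 y1 Hx1y1); [| exact Hl].
    apply (HPQ x1 y0 Hx1y0'), (HPQ x0 y0 H0), HP0.
Qed.

Lemma component_const (k m : R -> R) x0 y0 :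
  (forall x y, C x y -> k x = m y) -> C x0 y0 ->
  (forall x, projx C x -> k x = k x0) /\ (forall y, projy C y -> m y = k x0).
Proof.
  intros Hkm H0.
  apply (component_propagate (fun x => k x = k x0) (fun y => m y = k x0) x0 y0);
    [| exact H0 | reflexivity].
  intros x y Hxy. rewrite (Hkm x y Hxy). tauto.
Qed.

Definition factorization (a b : R -> R) : Prop :=
  (forall x, a x <> 0) /\ (forall y, b y <> 0) /\ (forall x y, C x y -> a x * b y = y - x).

Lemma factorization_unique a b a' b' x0 y0 :
  factorization a b -> factorization a' b' -> C x0 y0 -> a x0 = a' x0 ->
  (forall x, projx C x -> a x = a' x) /\ (forall y, projy C y -> b y = b' y).
Proof.
  intros [Ha [Hb Hab]] [Ha' [Hb' Hab']] H0 Ha0.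
  assert (Hratio : forall x y, C x y -> a' x / a x = b y / b' y).
  { intros x y Hxy. specialize (Ha x). specialize (Hb' y).
    apply (Rmult_eq_reg_r (a x * b' y)); [| exact (Rmult_integral_contrapositive_currified _ _ Ha Hb')].
    transitivity (a' x * b' y); [field; exact Ha |].
    transitivity (a x * b y); [| field; exact Hb'].
    rewrite (Hab x y Hxy), (Hab' x y Hxy). reflexivity. }
  destruct (component_const _ _ x0 y0 Hratio H0) as [Hx Hy].
  assert (Hone : a' x0 / a x0 = 1) by (rewrite Ha0; field; exact (Ha' x0)).
  split.
  - intros x Hx'. specialize (Hx x Hx'). rewrite Hone in Hx. specialize (Ha x).
    apply (Rmult_eq_reg_r (/ a x)); [| now apply Rinv_neq_0_compat].
    rewrite Rinv_r by exact Ha. symmetry. exact Hx.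
  - intros y Hy'. specialize (Hy y Hy'). rewrite Hone in Hy. specialize (Hb' y).
    apply (Rmult_eq_reg_r (/ b' y)); [| now apply Rinv_neq_0_compat].
    rewrite Rinv_r by exact Hb'. exact Hy.
Qed.

Lemma position_shift_eq a b c h g x y :
  factorization a b -> C x y ->
  h x * (y - x) + g y = (h x - c / a x) * (y - x) + (g y + c * b y).
Proof.
  intros [Ha [_ Hab]] Hxy. rewrite <- (Hab x y Hxy). field. exact (Ha x).
Qed.

Lemma portfolio_position_classify a b v h0 g0 h g :
  factorization a b -> portfolio_position C v h0 g0 -> portfolio_position C v h g ->
  exists c, (forall x, projx C x -> h x = h0 x + c * / a x) /\
            (forall y, projy C y -> g y = g0 y + c * - b y).
Proof.
  intros [Ha [Hb Hab]] Hpos0 Hpos.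
  destruct component_inhabited as [x0 [y0 H0]].
  assert (Hdiff : forall x y, C x y -> (h x - h0 x) * a x = (g0 y - g y) / b y).
  { intros x y Hxy. specialize (Hb y).
    apply (Rmult_eq_reg_r (b y)); [| exact Hb].
    transitivity ((h x - h0 x) * (y - x)); [rewrite <- (Hab x y Hxy); ring |].
    transitivity (g0 y - g y); [| field; exact Hb].
    pose proof (Hpos0 x y Hxy). pose proof (Hpos x y Hxy). lra. }
  destruct (component_const _ _ x0 y0 Hdiff H0) as [Hx Hy].
  exists ((h x0 - h0 x0) * a x0). split.
  - intros x Hx'. rewrite <- (Hx x Hx'). field. exact (Ha x).
  - intros y Hy'. rewrite <- (Hy y Hy'). field. exact (Hb y).
Qed.

Lemma normalized_positions_converge a b x0 y0 (hn gn : nat -> R -> R) v :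
  factorization a b -> C x0 y0 -> a x0 = 1 ->
  (forall x y, C x y -> Un_cv (fun n => hn n x * (y - x) + gn n y) (v x y)) ->
  exists h g,
    (forall x, projx C x -> Un_cv (fun n => hn n x - hn n x0 / a x) (h x)) /\
    (forall y, projy C y -> Un_cv (fun n => gn n y + hn n x0 * b y) (g y)) /\
    portfolio_position C v h g.
Proof.
  intros Hab H0 Ha0 Hv.
  set (hn' := fun n x => hn n x - hn n x0 / a x).
  set (gn' := fun n y => gn n y + hn n x0 * b y).
  assert (Hv' : forall x y, C x y -> Un_cv (fun n => hn' n x * (y - x) + gn' n y) (v x y)).
  { intros x y Hxy. apply Un_cv_ext with (2 := Hv x y Hxy).
    intros n. exact (position_shift_eq a b (hn n x0) (hn n) (gn n) x y Hab Hxy). }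
  destruct (component_propagate (fun x => exists l, Un_cv (fun n => hn' n x) l)
                                 (fun y => exists l, Un_cv (fun n => gn' n y) l) x0 y0)
    as [Hx Hy].
  - intros x y Hxy. apply (ex_Un_cv_affine_iff _ _ (y - x) (v x y)); [| exact (Hv' x y Hxy)].
    exact (Eo_sub_neq0 _ _ _ (component_Eo _ _ Hxy)).
  - exact H0.
  - exists 0. apply Un_cv_ext with (2 := Un_cv_const 0).
    intros n. unfold hn'. rewrite Ha0. field.
  - destruct (choice_default _ _ (projx C) (fun x l => Un_cv (fun n => hn' n x) l) 0 Hx)
      as [h Hh].
    destruct (choice_default _ _ (projy C) (fun y l => Un_cv (fun n => gn' n y) l) 0 Hy)
      as [g Hg].
    exists h, g. split; [intros x Hx'; exact (proj1 (Hh x) Hx') |].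
    split; [intros y Hy'; exact (proj1 (Hg y) Hy') |].
    intros x y Hxy. apply (UL_sequence _ _ _ (Hv' x y Hxy)).
    apply CV_plus; [apply CV_mult; [| apply Un_cv_const] |].
    + exact (proj1 (Hh x) (ex_intro _ y Hxy)).
    + exact (proj1 (Hg y) (ex_intro _ x Hxy)).
Qed.

Hypothesis HN : no_identifying_cycles E C.

Lemma path_ratio_cycle x y l : C x y -> is_path E x y l x y -> path_ratio x y l x = 1.
Proof.
  intros Hxy Hl.
  assert (Hcyc : is_path E x y ((x, y) :: l) x y).
  { simpl. pose proof (component_Eo _ _ Hxy). tauto. }
  assert (Heq : cyc_prod1 ((x, y) :: l) = cyc_prod2 ((x, y) :: l)).
  { destruct (Req_dec (cyc_prod1 ((x, y) :: l)) (cyc_prod2 ((x, y) :: l))) as [| Hneq];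
      [assumption |].
    exfalso. apply (HN x y _ Hxy Hcyc). unfold identifying. lra. }
  rewrite cyc_prod2_cons, <- (path_ratio_mul_cyc_prod1 _ _ _ _ _ _ Hl) in Heq.
  apply (Rmult_eq_reg_r (cyc_prod1 ((x, y) :: l))); [| exact (cyc_prod1_path_neq0 _ _ _ _ _ _ Hl)].
  rewrite Rmult_1_l. symmetry. exact Heq.
Qed.

Lemma path_ratio_independent x0 y0 l1 l2 x y1 y2 :
  C x0 y0 -> is_path E x0 y0 l1 x y1 -> is_path E x0 y0 l2 x y2 ->
  path_ratio x0 y0 l1 x = path_ratio x0 y0 l2 x.
Proof.
  intros H0 Hl1 Hl2.
  destruct (is_path_rev _ _ _ _ _ _ Hl2) as [l2' [Hl2' Hinv]].
  assert (Hback : is_path E x y1 ((x, y2) :: l2') x0 y0).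
  { simpl. pose proof (is_path_end _ _ _ _ _ _ Hl1). pose proof (is_path_start _ _ _ _ _ _ Hl2'). tauto. }
  assert (Hone := path_ratio_cycle _ _ _ H0 (is_path_cat _ _ _ _ _ _ _ _ _ Hl1 Hback)).
  rewrite path_ratio_cat in Hone. simpl in Hone.
  replace ((y1 - x) / (y1 - x)) with 1 in Hone
    by (field; exact (Eo_sub_neq0 _ _ _ (is_path_end _ _ _ _ _ _ Hl1))).
  rewrite Rmult_1_l in Hone.
  rewrite <- (Rmult_1_r (path_ratio x0 y0 l1 x)), <- Hinv, <- Rmult_assoc, Hone. ring.
Qed.

(* [a x] is the [path_ratio] of any path from [(x0, y0)] to a point with abscissa [x];
   [path_ratio_independent] makes this a definition. *)
Lemma potential_exists x0 y0 :
  C x0 y0 ->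
  exists a, (forall x, a x <> 0) /\ a x0 = 1 /\
            (forall x x' y, C x y -> C x' y -> a x' * (y - x) = a x * (y - x')).
Proof.
  intros H0.
  destruct (choice_default _ _ (fun x => exists y l, is_path E x0 y0 l x y)
              (fun x r => forall y l, is_path E x0 y0 l x y -> r = path_ratio x0 y0 l x) 1)
    as [a Ha].
  { intros x [y [l Hl]]. exists (path_ratio x0 y0 l x). intros y' l' Hl'.
    exact (path_ratio_independent _ _ _ _ _ _ _ H0 Hl Hl'). }
  assert (Ha_path : forall x y l, is_path E x0 y0 l x y -> a x = path_ratio x0 y0 l x).
  { intros x y l Hl. exact (proj1 (Ha x) (ex_intro _ y (ex_intro _ l Hl)) y l Hl). }
  assert (H0o := component_Eo _ _ H0).
  exists a. split; [| split].
  - intros x. destruct (classic (exists y l, is_path E x0 y0 l x y)) as [[y [l Hl]] | Hno].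
    + rewrite (Ha_path _ _ _ Hl). exact (path_ratio_neq0 _ _ _ _ _ _ Hl).
    + rewrite (proj2 (Ha x) Hno). exact R1_neq_R0.
  - rewrite (Ha_path x0 y0 []) by (simpl; tauto). simpl.
    field. exact (Eo_sub_neq0 _ _ _ H0o).
  - intros x x' y Hxy Hx'y.
    destruct (component_connected _ _ _ _ H0 Hxy) as [l Hl].
    assert (Hl' : is_path E x0 y0 (l ++ [(x, y)]) x' y).
    { apply is_path_cat; [exact Hl |]. simpl.
      pose proof (component_Eo _ _ Hxy). pose proof (component_Eo _ _ Hx'y). tauto. }
    rewrite (Ha_path _ _ _ Hl'), (Ha_path _ _ _ Hl), path_ratio_cat. simpl.
    field. exact (Eo_sub_neq0 _ _ _ (component_Eo _ _ Hxy)).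
Qed.

Lemma factorization_exists x0 y0 : C x0 y0 -> exists a b, factorization a b /\ a x0 = 1.
Proof.
  intros H0. destruct (potential_exists _ _ H0) as [a [Ha [Ha0 Hstep]]].
  destruct (choice_default _ _ (projy C)
              (fun y s => s <> 0 /\ forall x, C x y -> a x * s = y - x) 1) as [b Hb].
  { intros y [x Hxy]. exists ((y - x) / a x).
    assert (Hyx := Eo_sub_neq0 _ _ _ (component_Eo _ _ Hxy)). specialize (Ha x). split.
    - exact (Rdiv_neq0 _ _ Hyx Ha).
    - intros x' Hx'y. transitivity (a x' * (y - x) / a x); [field; exact Ha |].
      rewrite (Hstep x x' y Hxy Hx'y). field. exact Ha. }
  exists a, b. split; [| exact Ha0]. split; [exact Ha | split].
  - intros y. destruct (classic (projy C y)) as [Hy | Hy].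
    + exact (proj1 (proj1 (Hb y) Hy)).
    + rewrite (proj2 (Hb y) Hy). exact R1_neq_R0.
  - intros x y Hxy. exact (proj2 (proj1 (Hb y) (ex_intro _ x Hxy)) x Hxy).
Qed.

Lemma portfolio_positions_not_unique v h0 g0 :
  portfolio_position C v h0 g0 ->
  forall x y, C x y ->
    exists h g ht gt,
      portfolio_position C v h g /\ portfolio_position C v ht gt /\
      h x <> ht x /\ g y <> gt y.
Proof.
  intros Hpos x y _.
  destruct component_inhabited as [xb [yb Hb]].
  destruct (factorization_exists _ _ Hb) as [a [b [Hab _]]].
  exists h0, g0, (fun x => h0 x - 1 / a x), (fun y => g0 y + 1 * b y).
  split; [exact Hpos | split].
  - intros x' y' Hx'y'. rewrite (Hpos x' y' Hx'y'). exact (position_shift_eq _ _ 1 _ _ _ _ Hab Hx'y').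
  - destruct Hab as [Ha [Hb' _]]. specialize (Ha x). specialize (Hb' y).
    assert (Hinv := Rdiv_neq0 _ _ R1_neq_R0 Ha). split; lra.
Qed.

Lemma portfolio_positions_one_parameter v h0 g0 :
  portfolio_position C v h0 g0 ->
  exists h0 g0 al be : R -> R,
    (forall c : R, portfolio_position C v
                     (fun x => h0 x + c * al x) (fun y => g0 y + c * be y)) /\
    (forall h g, portfolio_position C v h g ->
       exists! c : R,
         (forall x, projx C x -> h x = h0 x + c * al x) /\
         (forall y, projy C y -> g y = g0 y + c * be y)).
Proof.
  intros Hpos.
  destruct component_inhabited as [xb [yb Hb]].
  destruct (factorization_exists _ _ Hb) as [a [b [Hab _]]].
  exists h0, g0, (fun x => / a x), (fun y => - b y). split.
  - intros c x y Hxy. rewrite (Hpos x y Hxy), (position_shift_eq _ _ (- c) _ _ _ _ Hab Hxy).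
    field. exact (proj1 Hab x).
  - intros h g Hhg.
    destruct (portfolio_position_classify _ _ _ _ _ _ _ Hab Hpos Hhg) as [c Hc].
    exists c. split; [exact Hc |].
    intros c' [Hc' _]. assert (Hxb : projx C xb) by (exists yb; exact Hb).
    apply (Rmult_eq_reg_r (/ a xb)); [| exact (Rinv_neq_0_compat _ (proj1 Hab xb))].
    apply (Rplus_eq_reg_l (h0 xb)). rewrite <- (proj1 Hc xb Hxb). exact (Hc' xb Hxb).
Qed.

End Component.

Theorem proposition2p8 (E C : R -> R -> Prop) :
  is_component E C ->
  no_identifying_cycles E C ->
  (* (a) *)
  (forall (v : R -> R -> R),
     (exists h g, portfolio_position C v h g) ->
     (forall x y, C x y ->
        exists h g ht gt,
          portfolio_position C v h g /\ portfolio_position C v ht gt /\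
          h x <> ht x /\ g y <> gt y) /\
     (* one-parameter (affine) family, on C^x × C^y *)
     (exists h0 g0 al be : R -> R,
        (forall c : R, portfolio_position C v
                         (fun x => h0 x + c * al x) (fun y => g0 y + c * be y)) /\
        (forall h g, portfolio_position C v h g ->
           exists! c : R,
             (forall x, projx C x -> h x = h0 x + c * al x) /\
             (forall y, projy C y -> g y = g0 y + c * be y)))) /\
  (* (b) *)
  (forall x0 y0, C x0 y0 ->
     (exists a b : R -> R,
        (forall x, a x <> 0) /\ (forall y, b y <> 0) /\
        (forall x y, C x y -> a x * b y = y - x) /\ a x0 = 1) /\
     (forall a b a' b' : R -> R,
        (forall x, a x <> 0) -> (forall y, b y <> 0) ->
        (forall x y, C x y -> a x * b y = y - x) -> a x0 = 1 ->
        (forall x, a' x <> 0) -> (forall y, b' y <> 0) ->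
        (forall x y, C x y -> a' x * b' y = y - x) -> a' x0 = 1 ->
        (forall x, projx C x -> a x = a' x) /\
        (forall y, projy C y -> b y = b' y)) /\
     (forall (a b : R -> R),
        (forall x, a x <> 0) -> (forall y, b y <> 0) ->
        (forall x y, C x y -> a x * b y = y - x) -> a x0 = 1 ->
        forall (hn gn : nat -> R -> R) (v : R -> R -> R),
          (forall x y, C x y ->
             Un_cv (fun n => hn n x * (y - x) + gn n y) (v x y)) ->
          let h'n := fun n x => hn n x - hn n x0 / a x in
          let g'n := fun n y => gn n y + hn n x0 * b y in
          (forall n x y, C x y ->
             hn n x * (y - x) + gn n y = h'n n x * (y - x) + g'n n y) /\
          exists h' g' : R -> R,
            (forall x, projx C x -> Un_cv (fun n => h'n n x) (h' x)) /\
            (forall y, projy C y -> Un_cv (fun n => g'n n y) (g' y)) /\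
            portfolio_position C v h' g')).
Proof.
  intros HC HN. split.
  - intros v [h0 [g0 Hpos]]. split.
    + exact (portfolio_positions_not_unique E C HC HN v h0 g0 Hpos).
    + exact (portfolio_positions_one_parameter E C HC HN v h0 g0 Hpos).
  - intros x0 y0 H0. split; [| split].
    + destruct (factorization_exists E C HC HN x0 y0 H0) as [a [b [Hab Ha0]]].
      exists a, b. destruct Hab as [Ha [Hb Hab]]. tauto.
    + intros a b a' b' Ha Hb Hab Ha0 Ha' Hb' Hab' Ha0'.
      apply (factorization_unique E C HC a b a' b' x0 y0
               (conj Ha (conj Hb Hab)) (conj Ha' (conj Hb' Hab')) H0).
      congruence.
    + intros a b Ha Hb Hab Ha0 hn gn v Hv h'n g'n.
      assert (Hfact : factorization C a b) by exact (conj Ha (conj Hb Hab)).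
      split.
      * intros n x y Hxy. exact (position_shift_eq C a b (hn n x0) (hn n) (gn n) x y Hfact Hxy).
      * exact (normalized_positions_converge E C HC a b x0 y0 hn gn v Hfact H0 Ha0 Hv).
Qed.
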